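(* Let $R$ be a von Neumann regular ring with $\omega(\Gamma'(R))<\infty$. Then $R\cong F_1\times\cdots\times F_n$ where each $F_i$ is a field and $n=|\mathrm{Min}(R)|$.
   Context: All rings are commutative with identity $1\ne 0$. $W^*(R)$ denotes the set of non-zero non-unit elements of $R$. The cozero-divisor graph $\Gamma'(R)$ is the simple graph with vertex set $W^*(R)$, in which distinct $a,b$ are adjacent iff $a\notin Rb$ and $b\notin Ra$. A ring $R$ is von Neumann regular if for every $r\in R$ there is $s\in R$ with $r=r^2s$. $\mathrm{Min}(R)$ is the set of minimal prime ideals of $R$. $\omega(G)$ is the clique number of $G$. *)

From HB Require Import structures.
From mathcomp Require Import all_boot all_order all_algebra.
Set Implicit Arguments. Unset Strict Implicit. Unset Printing Implicit Defensive.
Import GRing.Theory.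
Local Open Scope ring_scope.

(* units and principal ideals, stated as in the paper (no computable inverse needed) *)
Definition is_unit (R : comNzRingType) (a : R) : Prop := exists b : R, a * b = 1.

Definition in_principal (R : comNzRingType) (a b : R) : Prop := exists r : R, a = r * b.

Definition Wstar (R : comNzRingType) (a : R) : Prop := a <> 0 /\ ~ is_unit a.

Definition cozero_adj (R : comNzRingType) (a b : R) : Prop :=
  Wstar a /\ Wstar b /\ a <> b /\ ~ in_principal a b /\ ~ in_principal b a.

Definition cozero_clique (R : comNzRingType) (s : seq R) : Prop :=
  uniq s /\ (forall a, a \in s -> Wstar a) /\
  (forall a b, a \in s -> b \in s -> a <> b -> cozero_adj a b).

Definition finite_clique_number (R : comNzRingType) : Prop :=
  exists N : nat, forall s : seq R, cozero_clique s -> (size s <= N)%N.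

Definition von_neumann_regular (R : comNzRingType) : Prop :=
  forall r : R, exists s : R, r = r ^+ 2 * s.

Definition is_ideal (R : comNzRingType) (P : R -> Prop) : Prop :=
  P 0 /\ (forall x y, P x -> P y -> P (x + y)) /\ (forall r x, P x -> P (r * x)).

Definition is_prime_ideal (R : comNzRingType) (P : R -> Prop) : Prop :=
  is_ideal P /\ ~ P 1 /\ (forall a b, P (a * b) -> P a \/ P b).

Definition is_minimal_prime (R : comNzRingType) (P : R -> Prop) : Prop :=
  is_prime_ideal P /\
  (forall Q : R -> Prop, is_prime_ideal Q -> (forall x, Q x -> P x) ->
     forall x, P x -> Q x).

Definition same_set (T : Type) (A B : T -> Prop) : Prop := forall x, A x <-> B x.

(* |Min(R)| = n : Min(R) is in bijection with 'I_n (sets compared extensionally) *)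
Definition card_Min (R : comNzRingType) (n : nat) : Prop :=
  exists f : 'I_n -> (R -> Prop),
    (forall i, is_minimal_prime (f i)) /\
    (forall i j, same_set (f i) (f j) -> i = j) /\
    (forall P, is_minimal_prime P -> exists i, same_set (f i) P).

Definition ring_iso_prod (R : comNzRingType) (n : nat) (F : 'I_n -> fieldType)
  (phi : R -> forall i : 'I_n, F i) : Prop :=
  (forall x y, phi (x + y) = (fun i => phi x i + phi y i)) /\
  (forall x y, phi (x * y) = (fun i => phi x i * phi y i)) /\
  phi 1 = (fun i => 1) /\
  (forall x y, phi x = phi y -> x = y) /\
  (forall g : forall i : 'I_n, F i, exists x, phi x = g).

From HB Require Import structures.
From mathcomp Require Import all_boot all_order all_algebra.
From Stdlib Require Import ClassicalEpsilon FunctionalExtensionality.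
Set Implicit Arguments. Unset Strict Implicit. Unset Printing Implicit Defensive.
Import GRing.Theory.
Local Open Scope ring_scope.

(* A complete family of n >= 2 orthogonal idempotents is an n-clique of the
   cozero-divisor graph, so a bounded clique number bounds the length of such
   families; a maximal one consists of primitive idempotents, since a
   non-primitive e splits as f + (e - f).  For a primitive idempotent e,
   regularity makes eR a field: if x = x^2 t with x in eR nonzero, then xt is a
   nonzero idempotent below e, hence equal to e.  So R is the product of the
   fields e_i R, and its minimal primes are the annihilators of the e_i. *)

Section CornerField.
Variables (R : comNzRingType) (e : R).
Hypotheses (e_idem : e * e = e) (e_neq0 : e != 0).
Hypothesis corner_inv : forall x : R, x * e = x -> x != 0 -> exists y, x * y = e.

Record corner := Corner { corner_val : R; corner_valP : corner_val * e == corner_val }.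
HB.instance Definition _ := [isSub for corner_val].
HB.instance Definition _ := [Choice of corner by <:].

Lemma corner0P : (0 : R) * e == 0. Proof. by rewrite mul0r. Qed.
Lemma cornerDP (x y : corner) : (corner_val x + corner_val y) * e == corner_val x + corner_val y.
Proof. by rewrite mulrDl (eqP (corner_valP x)) (eqP (corner_valP y)). Qed.
Lemma cornerNP (x : corner) : (- corner_val x) * e == - corner_val x.
Proof. by rewrite mulNr (eqP (corner_valP x)). Qed.
Lemma corner1P : e * e == e. Proof. by rewrite e_idem. Qed.
Lemma cornerMP (x y : corner) : (corner_val x * corner_val y) * e == corner_val x * corner_val y.
Proof. by rewrite -mulrA (eqP (corner_valP y)). Qed.

Definition corner_add x y := Corner (cornerDP x y).
Definition corner_opp x := Corner (cornerNP x).
Definition corner_mul x y := Corner (cornerMP x y).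

Lemma corner_addA : associative corner_add.
Proof. by move=> x y z; apply: val_inj; rewrite /= addrA. Qed.
Lemma corner_addC : commutative corner_add.
Proof. by move=> x y; apply: val_inj; rewrite /= addrC. Qed.
Lemma corner_add0 : left_id (Corner corner0P) corner_add.
Proof. by move=> x; apply: val_inj; rewrite /= add0r. Qed.
Lemma corner_addN : left_inverse (Corner corner0P) corner_opp corner_add.
Proof. by move=> x; apply: val_inj; rewrite /= addNr. Qed.
HB.instance Definition _ :=
  GRing.isZmodule.Build corner corner_addA corner_addC corner_add0 corner_addN.

Lemma corner_mulA : associative corner_mul.
Proof. by move=> x y z; apply: val_inj; rewrite /= mulrA. Qed.
Lemma corner_mulC : commutative corner_mul.
Proof. by move=> x y; apply: val_inj; rewrite /= mulrC. Qed.
Lemma corner_mul1 : left_id (Corner corner1P) corner_mul.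
Proof. by move=> x; apply: val_inj; rewrite /= mulrC (eqP (corner_valP x)). Qed.
Lemma corner_mulD : left_distributive corner_mul (@GRing.add corner).
Proof. by move=> x y z; apply: val_inj; rewrite /= mulrDl. Qed.
Lemma corner1_neq0 : Corner corner1P != 0.
Proof. by apply/eqP => /(congr1 val) /= /eqP; rewrite (negbTE e_neq0). Qed.
HB.instance Definition _ := GRing.Zmodule_isComNzRing.Build corner
  corner_mulA corner_mulC corner_mul1 corner_mulD corner1_neq0.

(* The inverse is chosen classically; it is junk (0) exactly when no inverse exists. *)
Definition corner_inv_val (x : corner) : R :=
  match excluded_middle_informative (exists y, corner_val x * y = e) with
  | left H => proj1_sig (constructive_indefinite_description _ H) * e
  | right _ => 0
  end.
Lemma corner_invP x : corner_inv_val x * e == corner_inv_val x.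
Proof.
by rewrite /corner_inv_val; case: excluded_middle_informative => H; rewrite ?mul0r // -mulrA e_idem.
Qed.
Definition corner_invr x := Corner (corner_invP x).

Lemma corner_mulVf (x : corner) : x != 0 -> corner_invr x * x = 1.
Proof.
move=> x_neq0; apply: val_inj; rewrite /= /corner_inv_val.
case: excluded_middle_informative => [H|[]].
  by case: constructive_indefinite_description => y /= xy; rewrite mulrC mulrA xy e_idem.
apply: corner_inv; first exact/eqP/(corner_valP x).
by apply: contra x_neq0 => /eqP x0; apply/eqP/val_inj.
Qed.
Lemma corner_inv0 : corner_invr 0 = 0.
Proof.
apply: val_inj; rewrite /= /corner_inv_val.
case: excluded_middle_informative => [H|//]; exfalso.
by case: H => y; rewrite /= mul0r => e0; move: e_neq0; rewrite -e0 eqxx.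
Qed.
HB.instance Definition _ := GRing.ComNzRing_isField.Build corner corner_mulVf corner_inv0.

Definition corner_fieldType : fieldType := corner.
End CornerField.

Section OrthogonalIdempotents.
Variable R : comNzRingType.

Definition complete_orthogonal_idempotents (s : seq R) : Prop :=
  [/\ uniq s, forall x, x \in s -> x != 0 /\ x * x = x,
      forall x y, x \in s -> y \in s -> x != y -> x * y = 0
    & \sum_(x <- s) x = 1].

Definition primitive (e : R) : Prop :=
  forall f, f * f = f -> f * e = f -> f != 0 -> f = e.

Lemma complete_orthogonal_idempotents_perm s t :
  perm_eq s t -> complete_orthogonal_idempotents s -> complete_orthogonal_idempotents t.
Proof.
move=> st [s_uniq s_idem s_orth s_sum].
have t_s x : (x \in t) = (x \in s) by rewrite (perm_mem st).
split; first by rewrite -(perm_uniq st).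
- by move=> x; rewrite t_s; apply: s_idem.
- by move=> x y; rewrite !t_s; apply: s_orth.
- by rewrite -(perm_big _ st).
Qed.

Lemma split_orthogonal_idempotent e f t :
  complete_orthogonal_idempotents (e :: t) -> f * f = f -> f * e = f -> f != 0 -> f != e ->
  complete_orthogonal_idempotents [:: f, e - f & t].
Proof.
move=> [/= /andP[e_t t_uniq] idem orth sum1] ff fe f0 f_neq_e.
have [e0 ee] := idem e (mem_head e t).
have tP g : g \in t -> g != e /\ g \in e :: t.
  by move=> gt; split; [apply: contraNneq e_t => <- | rewrite inE gt orbT].
have eg g : g \in t -> e * g = 0 by move=> /tP[ge gt]; rewrite orth ?mem_head // eq_sym.
have fg g : g \in t -> f * g = 0 by move=> gt; rewrite -fe -mulrA eg // mulr0.
have efg g : g \in t -> (e - f) * g = 0 by move=> gt; rewrite mulrBl eg // fg // subr0.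
have fef : f * (e - f) = 0 by rewrite mulrBr fe ff subrr.
have ef0 : e - f != 0 by rewrite subr_eq0 eq_sym.
have efe : (e - f) * (e - f) = e - f by rewrite mulrBl fef subr0 mulrBr ee mulrC fe.
split.
- rewrite /= t_uniq andbT !inE negb_or; apply/andP; split; first (apply/andP; split).
  + by apply: contra f0 => /eqP f_ef; rewrite -ff {2}f_ef fef.
  + by apply/negP => /fg; rewrite ff; apply/eqP.
  + by apply/negP => /efg; rewrite efe; apply/eqP.
- by move=> x; rewrite !inE => /orP[/eqP->|/orP[/eqP->|/tP[_ /idem]]].
- move=> x y; rewrite !inE => /orP[/eqP->|/orP[/eqP->|xt]] /orP[/eqP->|/orP[/eqP->|yt]] xy;
    rewrite ?eqxx // in xy;
    try by [rewrite fef | rewrite fg | rewrite efg | rewrite mulrC fef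
           | rewrite mulrC fg | rewrite mulrC efg].
  by apply: orth => //; [case: (tP x xt) | case: (tP y yt)].
- by rewrite !big_cons addrA subrKC -sum1 big_cons.
Qed.

Lemma refine_orthogonal_idempotents s :
  complete_orthogonal_idempotents s -> ~ (forall e, e \in s -> primitive e) ->
  exists s', complete_orthogonal_idempotents s' /\ size s' = (size s).+1.
Proof.
move=> s_coi not_prim.
have [e [f [es ff fe f0 f_neq_e]]] :
    exists e f, [/\ e \in s, f * f = f, f * e = f, f != 0 & f != e].
  apply: Classical_Prop.NNPP => no_split; apply: not_prim => e es f ff fe f0.
  by apply: Classical_Prop.NNPP => /eqP f_neq_e; apply: no_split; exists e, f.
have s_e := perm_to_rem es.
exists [:: f, e - f & rem e s]; split.
  by apply: split_orthogonal_idempotent => //; apply: complete_orthogonal_idempotents_perm s_coi.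
by rewrite (perm_size s_e).
Qed.

Lemma orthogonal_idempotents_clique s :
  complete_orthogonal_idempotents s -> (2 <= size s)%N -> cozero_clique s.
Proof.
move=> [s_uniq idem orth _] s_ge2.
have other a : a \in s -> exists2 b, b \in s & b != a.
  move=> a_s; apply/(@hasP _ (fun b => b != a)); apply: contraTT s_ge2.
  rewrite -all_predC -ltnNge ltnS => /allP all_a.
  have s_a : {subset s <= [:: a]} by move=> b /all_a /=; rewrite negbK inE.
  exact: uniq_leq_size s_uniq s_a.
have vertex a : a \in s -> Wstar a.
  move=> a_s; have [a0 _] := idem a a_s; split; first exact/eqP.
  move=> [c ac]; have [b b_s ba] := other a a_s; have [b0 _] := idem b b_s.
  by move: b0; rewrite -[b]mulr1 -ac mulrA (orth b a) // mul0r eqxx.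
have not_below a b : a \in s -> b \in s -> a != b -> ~ in_principal a b.
  move=> a_s b_s ab [r a_rb]; have [a0 aa] := idem a a_s.
  by move: a0; rewrite -aa {1}a_rb -mulrA (orth b a) 1?eq_sym // mulr0 eqxx.
split=> //; split=> // a b a_s b_s /eqP ab; do 2 (split; first exact: vertex).
by split; [exact/eqP | split; apply: not_below; rewrite // eq_sym].
Qed.

Lemma exists_primitive_orthogonal_idempotents : finite_clique_number R ->
  exists s, complete_orthogonal_idempotents s /\ forall e, e \in s -> primitive e.
Proof.
move=> [N clique_le]; apply: Classical_Prop.NNPP => no_prim.
have long n : exists s, complete_orthogonal_idempotents s /\ size s = n.+1.
  elim: n => [|n [s [s_coi s_size]]].
    exists [:: 1]; split=> //; split=> //.
    - by move=> x; rewrite inE => /eqP->; rewrite oner_eq0 mulr1.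
    - by move=> x y; rewrite !inE => /eqP-> /eqP->; rewrite eqxx.
    - by rewrite big_seq1.
  have [|s' [s'_coi s'_size]] := refine_orthogonal_idempotents s_coi.
    by move=> s_prim; apply: no_prim; exists s.
  by exists s'; rewrite s'_size s_size.
have [s [s_coi s_size]] := long N.+1.
have s_ge2 : (2 <= size s)%N by rewrite s_size.
have := clique_le s (orthogonal_idempotents_clique s_coi s_ge2).
by rewrite s_size => /ltnW; rewrite ltnn.
Qed.

Lemma regular_primitive_corner_inv e : von_neumann_regular R -> primitive e ->
  forall x, x * e = x -> x != 0 -> exists y, x * y = e.
Proof.
move=> vnr e_prim x xe x0; have [t x_xxt] := vnr x; rewrite expr2 in x_xxt.
exists t; apply: e_prim.
- by rewrite mulrACA mulrA -x_xxt.
- by rewrite mulrAC xe.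
- by apply: contra x0 => /eqP xt0; rewrite x_xxt -mulrA xt0 mulr0.
Qed.
End OrthogonalIdempotents.

Section RegularProduct.
Variables (R : comNzRingType) (s : seq R).
Hypotheses (vnr : von_neumann_regular R) (s_coi : complete_orthogonal_idempotents s).
Hypothesis s_prim : forall e, e \in s -> primitive e.

Let E (i : 'I_(size s)) : R := nth 0 s i.
Let E_in i : E i \in s. Proof. exact: mem_nth. Qed.

Lemma idem_E i : E i * E i = E i. Proof. by case: s_coi => _ idem _ _; case: (idem _ (E_in i)). Qed.
Lemma E_neq0 i : E i != 0. Proof. by case: s_coi => _ idem _ _; case: (idem _ (E_in i)). Qed.
Lemma E_orth i j : i != j -> E i * E j = 0.
Proof. by case: s_coi => s_uniq _ orth _ ij; apply: orth; rewrite ?E_in // nth_uniq. Qed.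
Lemma sum_E : \sum_(i < size s) E i = 1.
Proof. by case: s_coi => _ _ _ <-; rewrite (big_nth 0) big_mkord. Qed.
Lemma sum_mulE x : \sum_(i < size s) x * E i = x.
Proof. by rewrite -mulr_sumr sum_E mulr1. Qed.

Definition component_field i : fieldType :=
  corner_fieldType (idem_E i) (E_neq0 i)
    (regular_primitive_corner_inv vnr (s_prim (E_in i))).

Lemma componentP x i : x * E i * E i == x * E i. Proof. by rewrite -mulrA idem_E. Qed.
Definition component (x : R) : forall i, component_field i :=
  fun i => Corner (componentP x i).

Lemma component_val x i : corner_val (component x i) = x * E i. Proof. by []. Qed.

Lemma component_mul x y i : component (x * y) i = component x i * component y i.
Proof. by apply: val_inj; rewrite /= mulrACA idem_E. Qed.

Lemma component_eq0 x i : (component x i == 0) = (x * E i == 0).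
Proof. by apply/eqP/eqP => [/(congr1 val)|x0] //; apply: val_inj. Qed.

Lemma component_iso : ring_iso_prod component.
Proof.
split; [|split; [|split; [|split]]].
- by move=> x y; apply: functional_extensionality_dep => i; apply: val_inj; rewrite /= mulrDl.
- by move=> x y; apply: functional_extensionality_dep => i; apply: component_mul.
- by apply: functional_extensionality_dep => i; apply: val_inj; rewrite /= mul1r.
- move=> x y xy; rewrite -(sum_mulE x) -(sum_mulE y); apply: eq_bigr => i _.
  by rewrite -!component_val xy.
- move=> g; exists (\sum_(i < size s) corner_val (g i)).
  apply: functional_extensionality_dep => i; apply: val_inj.
  rewrite /= mulr_suml (bigD1 i) //= big1 ?addr0; first exact/eqP/(corner_valP (g i)).
  by move=> j ji; rewrite -(eqP (corner_valP (g j))) -mulrA E_orth ?mulr0.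
Qed.

Definition annihilator (a x : R) : Prop := x * a = 0.

Lemma annihilator_prime i : is_prime_ideal (annihilator (E i)).
Proof.
rewrite /annihilator; split; [split; [|split]|split].
- by rewrite mul0r.
- by move=> x y x0 y0; rewrite mulrDl x0 y0 addr0.
- by move=> r x x0; rewrite -mulrA x0 mulr0.
- by rewrite mul1r; apply/eqP/E_neq0.
- move=> a b /eqP; rewrite -component_eq0 component_mul mulf_eq0 !component_eq0.
  by case/orP=> /eqP; [left | right].
Qed.

Lemma annihilator_minimal i : is_minimal_prime (annihilator (E i)).
Proof.
split; first exact: annihilator_prime.
move=> Q [[Q0 [_ QM]] [_ Q_prime]] Q_sub x x0.
have : Q ((1 - E i) * E i) by rewrite mulrBl mul1r idem_E subrr.
case/Q_prime => [Q_coE | /Q_sub]; last first.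
  by rewrite /annihilator idem_E => /eqP; rewrite (negbTE (E_neq0 i)).
have -> : x = x * (1 - E i) by rewrite mulrBr mulr1 (x0 : x * E i = 0) subr0.
exact: QM Q_coE.
Qed.

Lemma annihilator_inj i j : same_set (annihilator (E i)) (annihilator (E j)) -> i = j.
Proof.
move=> same; apply/eqP; apply: contraT => ij.
have /same : annihilator (E i) (E j) by rewrite /annihilator E_orth // eq_sym.
by rewrite /annihilator idem_E => /eqP; rewrite (negbTE (E_neq0 j)).
Qed.

(* A prime containing every E i would contain their sum 1; if P misses E i, then
   x * E i = 0 forces x into P, so P contains the minimal prime ann(E i). *)
Lemma minimal_prime_annihilator P : is_minimal_prime P ->
  exists i, same_set (annihilator (E i)) P.
Proof.
move=> [[[P0 [PD _]] [P1 P_prime]] P_min].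
have [i PEi] : exists i, ~ P (E i).
  apply: Classical_Prop.NNPP => all_in; apply: P1; rewrite -sum_E.
  by apply: (big_ind P) => // j _; apply: Classical_Prop.NNPP => PEj; apply: all_in; exists j.
have ann_sub x : annihilator (E i) x -> P x.
  by rewrite /annihilator => x0; have /P_prime[] : P (x * E i) by rewrite x0.
by exists i => x; split; [apply: ann_sub | apply: P_min (annihilator_prime i) ann_sub x].
Qed.
End RegularProduct.

Theorem lemma2p2 (R : comNzRingType) :
  von_neumann_regular R -> finite_clique_number R ->
  exists n : nat, card_Min R n /\
    exists (F : 'I_n -> fieldType) (phi : R -> forall i : 'I_n, F i),
      ring_iso_prod phi.
Proof.
move=> vnr /exists_primitive_orthogonal_idempotents[s [s_coi s_prim]].
exists (size s); split.
  exists (fun i => annihilator (nth 0 s i)); split; [|split].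
  - exact: annihilator_minimal vnr s_coi s_prim.
  - exact: annihilator_inj s_coi.
  - exact: minimal_prime_annihilator vnr s_coi s_prim.
by exists (component_field vnr s_coi s_prim), (component vnr s_coi s_prim); apply: component_iso.
Qed.
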